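(* Let $Z$ be a critical Galton–Watson process with $Z_0=1$ and non-degenerate offspring variable $\xi$ (i.e. $\mathbf{E}\xi=1$ and $\mathbf{P}(\xi=1)<1$). There exist finite constants $c_1,c_2$ such that $$\mathbf{P}(M_{m+1}\geq k)\leq c_1\frac{mB_k}{k^2}+m\,\mathbf{P}(\xi>k/2)$$ for all integers $k,m\geq1$ satisfying $k/(mB_k)>c_2$.
   Context: $M_m:=\max_{0\leq l\leq m-1}Z_l$. For $R\geq2$, $B_R:=\mathbf{E}\{\xi(\xi-1);\,\xi\leq R\}$. No index-$(1+\alpha)$ assumption is made here. *)

From Stdlib Require Import Reals Lra Lia.
From Coquelicot Require Import Coquelicot.
Open Scope R_scope.

Definition offspring_law (p : nat -> R) : Prop :=
  (forall j, 0 <= p j) /\ is_series p 1.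

Definition critical_nondeg (p : nat -> R) : Prop :=
  is_series (fun j => INR j * p j) 1 /\ p 1%nat < 1.

(* i-fold convolution power of p: the law of xi_1 + ... + xi_i
   (i iid copies of xi); this is the GW transition P(Z_{l+1}=j | Z_l=i). *)
Fixpoint convpow (p : nat -> R) (i j : nat) : R :=
  match i with
  | O => if Nat.eqb j 0 then 1 else 0
  | S i' => sum_n (fun a => p a * convpow p i' (j - a)) j
  end.

(* below p k l z = P(Z_0 < k, ..., Z_l < k, Z_l = z) for the GW process
   with Z_0 = 1 and offspring law p. *)
Fixpoint below (p : nat -> R) (k l z : nat) : R :=
  match l with
  | O => if (Nat.eqb z 1 && Nat.ltb z k)%bool then 1 else 0
  | S l' =>
      if Nat.ltb z k then
        sum_n (fun y => if Nat.ltb y k then below p k l' y * convpow p y z else 0) k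
      else 0
  end.

(* P(M_{m+1} >= k), where M_{m+1} = max_{0 <= l <= m} Z_l. *)
Definition GW_max_ge (p : nat -> R) (m k : nat) : R :=
  1 - sum_n (fun z => if Nat.ltb z k then below p k m z else 0) k.

Definition B (p : nat -> R) (R0 : nat) : R :=
  sum_n (fun j => INR j * (INR j - 1) * p j) R0.

Definition tail (p : nat -> R) (x : R) : R :=
  Series (fun j => if Rlt_dec x (INR j) then p j else 0).

From Stdlib Require Import Reals Lra Lia Classical Wf_nat.
From Coquelicot Require Import Coquelicot.
Open Scope R_scope.

(* Write K = k^2, h = floor(k/2) and V z = 1 - z^2/K, which is nonnegative exactly for z <= k.
   The quantity Phi_l = 1 - E[V(Z_l); M_{l+1} < k] dominates P(M_{l+1} >= k), and Phi_0 = 1/K.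
   From a state y < k, the law of the next generation dominates pointwise the law of a sum of
   y offspring truncated at h; that sum has mass at least 1 - y P(xi > h) and second moment at
   most y E[xi^2; xi <= h] + y^2, because the truncated mean is at most 1.  As V is negative
   beyond k, this gives E_y[V(Z_1); Z_1 < k] >= V y - y c with c = P(xi > k/2) + E[xi^2; xi <= k/2]/K.
   Since E[Z_l; M_{l+1} < k] <= 1, each generation raises Phi by at most c, hence
   P(M_{m+1} >= k) <= 1/K + m c.  Finally E[xi^2; xi <= k/2] <= B_k + 1, and the least positive
   value of B absorbs the remaining 1/K and m/K; no condition on k/(m B_k) is needed (c_2 = 0). *)

(* [sum_n] takes values in an abstract [AbelianMonoid]; equalities between sums are stated at [R]
   so that [ring] and [lra] apply to them. *)
Lemma sum_n_Rsucc (f : nat -> R) n : sum_n f (S n) = sum_n f n + f (S n).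
Proof. exact (sum_Sn f n). Qed.

Lemma sum_n_R0 (f : nat -> R) : sum_n f 0 = f 0%nat.
Proof. exact (sum_O f). Qed.

Lemma sum_n_Rext (f g : nat -> R) n :
  (forall i, (i <= n)%nat -> f i = g i) -> @eq R (sum_n f n) (sum_n g n).
Proof. apply sum_n_ext_loc. Qed.

Lemma sum_n_Rplus (f g : nat -> R) n :
  sum_n (fun i => f i + g i) n = sum_n f n + sum_n g n.
Proof. exact (sum_n_plus f g n). Qed.

Lemma sum_n_Rminus (f g : nat -> R) n :
  @eq R (sum_n (fun i => f i - g i) n) (sum_n f n - sum_n g n).
Proof.
  induction n as [|n IH]; [rewrite !sum_n_R0; ring|].
  rewrite !sum_n_Rsucc, IH; ring.
Qed.

Lemma sum_n_Rmult_l (c : R) (f : nat -> R) n :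
  sum_n (fun i => c * f i) n = c * sum_n f n.
Proof. exact (sum_n_mult_l c f n). Qed.

Lemma sum_n_Rmult_r (c : R) (f : nat -> R) n :
  sum_n (fun i => f i * c) n = sum_n f n * c.
Proof. exact (sum_n_mult_r c f n). Qed.

Lemma sum_n_zero n : @eq R (sum_n (fun _ => 0) n) 0.
Proof. rewrite sum_n_const; ring. Qed.

Lemma sum_n_Rle (f g : nat -> R) n :
  (forall i, (i <= n)%nat -> f i <= g i) -> sum_n f n <= sum_n g n.
Proof. intros H; rewrite !sum_n_Reals; now apply sum_Rle. Qed.

Lemma sum_n_nonneg (f : nat -> R) n :
  (forall i, (i <= n)%nat -> 0 <= f i) -> 0 <= sum_n f n.
Proof. intros H; rewrite <- (sum_n_zero n); now apply sum_n_Rle. Qed.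

Lemma sum_n_zero_beyond (f : nat -> R) n N :
  (n <= N)%nat -> (forall i, (n < i)%nat -> f i = 0) -> @eq R (sum_n f N) (sum_n f n).
Proof.
  intros HnN H; induction HnN as [|N HnN IH]; [reflexivity|].
  rewrite sum_n_Rsucc, IH, H; [ring|lia].
Qed.

Lemma sum_n_nonpos_beyond (f : nat -> R) n N :
  (n <= N)%nat -> (forall i, (n < i)%nat -> f i <= 0) -> sum_n f N <= sum_n f n.
Proof.
  intros HnN H; induction HnN as [|N HnN IH]; [lra|].
  assert (f (S N) <= 0) by (apply H; lia).
  rewrite sum_n_Rsucc; lra.
Qed.

Lemma sum_n_nonneg_le (f : nat -> R) n N :
  (n <= N)%nat -> (forall i, 0 <= f i) -> sum_n f n <= sum_n f N.
Proof.
  intros HnN H; induction HnN as [|N HnN IH]; [lra|].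
  rewrite sum_n_Rsucc; specialize (H (S N)); lra.
Qed.

Lemma sum_n_convolution (q c f : nat -> R) N :
  @eq R (sum_n (fun w => sum_n (fun a => q a * c (w - a)%nat) w * f w) N)
    (sum_n (fun a => q a * sum_n (fun b => c b * f (a + b)%nat) (N - a)) N).
Proof.
  induction N as [|N IH]; [rewrite !sum_n_R0; simpl; ring|].
  rewrite sum_n_Rsucc, IH.
  rewrite (sum_n_Rsucc (fun a => q a * sum_n _ (S N - a))), Nat.sub_diag, sum_n_R0, Nat.add_0_r.
  rewrite (sum_n_Rext (fun a => q a * sum_n (fun b => c b * f (a + b)%nat) (S N - a))
    (fun a => q a * sum_n (fun b => c b * f (a + b)%nat) (N - a) + q a * c (S N - a)%nat * f (S N))).
  - rewrite sum_n_Rplus, sum_n_Rmult_r, (sum_n_Rsucc (fun a => q a * c (S N - a)%nat)), Nat.sub_diag.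
    ring.
  - intros a Ha.
    replace (S N - a)%nat with (S (N - a)) by lia.
    rewrite sum_n_Rsucc; replace (a + S (N - a))%nat with (S N) by lia.
    ring.
Qed.

Lemma convpow_S (q : nat -> R) i w :
  convpow q (S i) w = sum_n (fun a => q a * convpow q i (w - a)%nat) w.
Proof. reflexivity. Qed.

Lemma convpow_nonneg (q : nat -> R) :
  (forall j, 0 <= q j) -> forall i w, 0 <= convpow q i w.
Proof.
  intros q_nonneg i; induction i as [|i IH]; intros w.
  - simpl; destruct (Nat.eqb w 0); lra.
  - rewrite convpow_S; apply sum_n_nonneg; intros a _.
    apply Rmult_le_pos; auto.
Qed.

Lemma convpow_le_compat (q p : nat -> R) :
  (forall j, 0 <= q j <= p j) -> forall i w, convpow q i w <= convpow p i w.
Proof.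
  intros Hqp i; induction i as [|i IH]; intros w; [simpl; lra|].
  rewrite !convpow_S; apply sum_n_Rle; intros a _.
  assert (0 <= convpow q i (w - a)) by (apply convpow_nonneg; intros; apply Hqp).
  specialize (Hqp a); specialize (IH (w - a)%nat).
  apply Rmult_le_compat; lra.
Qed.

Lemma sum_n_convpow_0 (q f : nat -> R) N :
  @eq R (sum_n (fun w => convpow q 0 w * f w) N) (f 0%nat).
Proof.
  rewrite (sum_n_zero_beyond _ 0 N); [rewrite sum_n_R0; simpl; ring|lia|].
  intros [|w] Hw; [lia|simpl; ring].
Qed.

Section BoundedSupport.

Variables (q : nat -> R) (h : nat).
Hypothesis q_support : forall j, (h < j)%nat -> q j = 0.

Lemma convpow_support i w : (i * h < w)%nat -> convpow q i w = 0.
Proof.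
  revert w; induction i as [|i IH]; intros w Hw.
  - destruct w; [lia|reflexivity].
  - rewrite convpow_S, <- (sum_n_zero w); apply sum_n_Rext; intros a _.
    destruct (Nat.le_gt_cases a h).
    + rewrite IH; [ring|simpl in Hw; lia].
    + rewrite q_support; [ring|lia].
Qed.

Lemma sum_n_convpow_support i f N : (i * h <= N)%nat ->
  @eq R (sum_n (fun w => convpow q i w * f w) N) (sum_n (fun w => convpow q i w * f w) (i * h)).
Proof.
  intros HN; apply sum_n_zero_beyond; auto.
  intros w Hw; rewrite convpow_support; [ring|exact Hw].
Qed.

Lemma sum_n_convpow_S i f N : (S i * h <= N)%nat ->
  @eq R (sum_n (fun w => convpow q (S i) w * f w) N)
    (sum_n (fun a => q a * sum_n (fun b => convpow q i b * f (a + b)%nat) (i * h)) h).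
Proof.
  intros HN; simpl in HN.
  rewrite (sum_n_Rext _ (fun w => sum_n (fun a => q a * convpow q i (w - a)%nat) w * f w));
    [|reflexivity].
  rewrite sum_n_convolution, (sum_n_zero_beyond _ h N); [|lia|].
  - apply sum_n_Rext; intros a Ha.
    rewrite (sum_n_convpow_support i (fun b => f (a + b)%nat)); [reflexivity|lia].
  - intros a Ha; rewrite q_support; [ring|lia].
Qed.

End BoundedSupport.

Section SubProbability.

Variable p : nat -> R.
Hypothesis p_nonneg : forall j, 0 <= p j.
Hypothesis p_mass : forall N, sum_n p N <= 1.
Hypothesis p_mean : forall N, sum_n (fun j => INR j * p j) N <= 1.

Lemma convpow_mass_le_1 i N : sum_n (convpow p i) N <= 1.
Proof.
  revert N; induction i as [|i IH]; intros N.
  - rewrite (sum_n_Rext _ (fun w => convpow p 0 w * 1)), sum_n_convpow_0; [lra|intros; ring].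
  - rewrite (sum_n_Rext _ (fun w => sum_n (fun a => p a * convpow p i (w - a)%nat) w * 1));
      [|intros; rewrite Rmult_1_r; reflexivity].
    rewrite sum_n_convolution.
    apply Rle_trans with (sum_n p N); auto.
    apply sum_n_Rle; intros a _.
    rewrite (sum_n_Rext _ (convpow p i)); [|intros; ring].
    specialize (IH (N - a)%nat); specialize (p_nonneg a); nra.
Qed.

Lemma convpow_mean_le i N : sum_n (fun w => convpow p i w * INR w) N <= INR i.
Proof.
  revert N; induction i as [|i IH]; intros N.
  - rewrite sum_n_convpow_0; simpl; lra.
  - rewrite (sum_n_Rext _ (fun w => sum_n (fun a => p a * convpow p i (w - a)%nat) w * INR w));
      [|reflexivity].
    rewrite sum_n_convolution.
    apply Rle_trans with (sum_n (fun a => INR a * p a + INR i * p a) N).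
    + apply sum_n_Rle; intros a _.
      rewrite (sum_n_Rext _ (fun b => INR a * convpow p i b + convpow p i b * INR b));
        [|intros; rewrite plus_INR; ring].
      rewrite sum_n_Rplus, sum_n_Rmult_l.
      apply Rle_trans with (p a * (INR a + INR i)); [|lra].
      apply Rmult_le_compat_l; auto.
      pose proof (convpow_mass_le_1 i (N - a)); pose proof (IH (N - a)%nat).
      pose proof (pos_INR a); nra.
    + rewrite sum_n_Rplus, sum_n_Rmult_l, S_INR.
      specialize (p_mean N); specialize (p_mass N); pose proof (pos_INR i); nra.
Qed.

End SubProbability.

Section TruncatedMoments.

Variables (q : nat -> R) (h : nat).
Hypothesis q_nonneg : forall j, 0 <= q j.
Hypothesis q_support : forall j, (h < j)%nat -> q j = 0.
Hypothesis q_mass : sum_n q h <= 1.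
Hypothesis q_mean : sum_n (fun a => INR a * q a) h <= 1.

Let mass := sum_n q h.
Let mean := sum_n (fun a => INR a * q a) h.
Let second := sum_n (fun a => INR a * INR a * q a) h.
Let M0 i := sum_n (fun w => convpow q i w * 1) (i * h).
Let M1 i := sum_n (fun w => convpow q i w * INR w) (i * h).
Let M2 i := sum_n (fun w => convpow q i w * (INR w * INR w)) (i * h).

Lemma convpow_moment_recursion i :
  M0 (S i) = mass * M0 i /\
  M1 (S i) = mean * M0 i + mass * M1 i /\
  M2 (S i) = second * M0 i + 2 * (mean * M1 i) + mass * M2 i.
Proof.
  unfold M0, M1, M2, mass, mean, second.
  rewrite !(sum_n_convpow_S q h q_support i _ (S i * h)) by lia.
  repeat split.
  - rewrite <- sum_n_Rmult_r; reflexivity.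
  - rewrite <- !sum_n_Rmult_r, <- sum_n_Rplus; apply sum_n_Rext; intros a _.
    rewrite (sum_n_Rext _ (fun b => INR a * (convpow q i b * 1) + convpow q i b * INR b));
      [|intros; rewrite plus_INR; ring].
    rewrite sum_n_Rplus, sum_n_Rmult_l; ring.
  - rewrite <- !sum_n_Rmult_r, <- sum_n_Rmult_l, <- !sum_n_Rplus; apply sum_n_Rext; intros a _.
    rewrite (sum_n_Rext _ (fun b => INR a * INR a * (convpow q i b * 1) +
      2 * INR a * (convpow q i b * INR b) + convpow q i b * (INR b * INR b)));
      [|intros; rewrite plus_INR; ring].
    rewrite !sum_n_Rplus, !sum_n_Rmult_l; ring.
Qed.

Lemma convpow_moment_bounds i :
  0 <= M0 i <= 1 /\ 1 - INR i * (1 - mass) <= M0 i /\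
  0 <= M1 i <= INR i /\ 0 <= M2 i <= INR i * second + INR i * INR i.
Proof.
  assert (0 <= mass) by (apply sum_n_nonneg; auto).
  assert (0 <= mean) by (apply sum_n_nonneg; intros; apply Rmult_le_pos; auto using pos_INR).
  assert (0 <= second)
    by (apply sum_n_nonneg; intros; apply Rmult_le_pos; auto; apply Rmult_le_pos; apply pos_INR).
  induction i as [|i IH].
  - unfold M0, M1, M2; simpl; rewrite !sum_n_R0; simpl; lra.
  - destruct (convpow_moment_recursion i) as (-> & -> & ->).
    rewrite S_INR; pose proof (pos_INR i).
    fold mass mean in q_mass, q_mean.
    destruct IH as ([] & ? & [] & []); repeat split; nra.
Qed.

Lemma sum_n_convpow_quadratic_ge (K : R) i : 0 < K ->
  1 - INR i * (1 - mass) - (INR i * second + INR i * INR i) / K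
  <= sum_n (fun w => convpow q i w * (1 - INR w * INR w / K)) (i * h).
Proof.
  intros K_pos.
  destruct (convpow_moment_bounds i) as (_ & HM0 & _ & _ & HM2).
  rewrite (sum_n_Rext _ (fun w => convpow q i w * 1 - convpow q i w * (INR w * INR w) * / K))
    by (intros; unfold Rdiv; ring).
  rewrite sum_n_Rminus, (sum_n_Rmult_r (/ K)).
  assert (M2 i * / K <= (INR i * second + INR i * INR i) * / K)
    by (apply Rmult_le_compat_r; [left; apply Rinv_0_lt_compat|]; lra).
  unfold M0, M2 in *; unfold Rdiv; lra.
Qed.

End TruncatedMoments.

Definition truncate (p : nat -> R) (h j : nat) : R := if (j <=? h)%nat then p j else 0.

Lemma truncate_eq (p : nat -> R) h j : (j <= h)%nat -> truncate p h j = p j.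
Proof. intros Hj; unfold truncate; destruct (Nat.leb_spec j h); [reflexivity|lia]. Qed.

Lemma truncate_support (p : nat -> R) h j : (h < j)%nat -> truncate p h j = 0.
Proof. intros Hj; unfold truncate; destruct (Nat.leb_spec j h); [lia|reflexivity]. Qed.

Lemma truncate_bounds (p : nat -> R) h j : 0 <= p j -> 0 <= truncate p h j <= p j.
Proof. intros Hp; unfold truncate; destruct (j <=? h)%nat; lra. Qed.

(* [step_below p k y g] is E[g(Z_1); Z_1 < k] for the process started from Z_0 = y. *)
Definition step_below (p : nat -> R) (k y : nat) (g : nat -> R) : R :=
  sum_n (fun w => if (w <? k)%nat then convpow p y w * g w else 0) k.

(* [expect_below p k l g] is E[g(Z_l); M_{l+1} < k]. *)
Definition expect_below (p : nat -> R) (k l : nat) (g : nat -> R) : R :=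
  sum_n (fun z => if (z <? k)%nat then below p k l z * g z else 0) k.

Section Potential.

Variables (p : nat -> R) (k : nat).
Hypothesis p_nonneg : forall j, 0 <= p j.
Hypothesis p_mass : forall N, sum_n p N <= 1.
Hypothesis p_mean : forall N, sum_n (fun j => INR j * p j) N <= 1.
Hypothesis k_ge_2 : (2 <= k)%nat.

Let K := INR k ^ 2.
Let V w := 1 - INR w * INR w / K.
Let h := (k / 2)%nat.

Lemma K_pos : 0 < K.
Proof. assert (0 < INR k) by (apply lt_0_INR; lia); unfold K; nra. Qed.

Lemma V_nonneg w : (w <= k)%nat -> 0 <= V w.
Proof.
  intros Hw; apply le_INR in Hw; pose proof (pos_INR w).
  assert (INR w * INR w / K <= 1) by (rewrite Rle_div_l by exact K_pos; unfold K; nra).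
  unfold V; lra.
Qed.

Lemma V_neg w : (k < w)%nat -> V w < 0.
Proof.
  intros Hw; apply lt_INR in Hw; pose proof (pos_INR k).
  assert (1 < INR w * INR w / K)
    by (apply Rnot_le_lt; rewrite Rle_div_l by exact K_pos; unfold K; nra).
  unfold V; lra.
Qed.

Lemma sum_n_convpow_le_step_below (q : nat -> R) y N :
  (forall j, 0 <= q j <= p j) -> (k <= N)%nat ->
  sum_n (fun w => convpow q y w * V w) N <= step_below p k y V.
Proof.
  intros Hqp HkN.
  apply Rle_trans with (sum_n (fun w => convpow q y w * V w) k).
  - apply sum_n_nonpos_beyond; auto; intros w Hw.
    pose proof (V_neg w Hw); pose proof (convpow_nonneg q (fun j => proj1 (Hqp j)) y w); nra.
  - apply sum_n_Rle; intros w Hw.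
    destruct (Nat.ltb_spec w k).
    + apply Rmult_le_compat_r; [apply V_nonneg; lia|now apply convpow_le_compat].
    + replace w with k by lia.
      assert (V k = 0) as -> by (unfold V, K; field; apply not_0_INR; lia).
      lra.
Qed.

Let c := 1 - sum_n p h + sum_n (fun a => INR a * INR a * p a) h / K.

Lemma step_below_V_ge y : V y - INR y * c <= step_below p k y V.
Proof.
  set (q := truncate p h).
  assert (q_bounds : forall j, 0 <= q j <= p j) by (intros; apply truncate_bounds, p_nonneg).
  assert (q_mass : sum_n q h = sum_n p h) by (apply sum_n_Rext, truncate_eq).
  assert (q_second : @eq R (sum_n (fun a => INR a * INR a * q a) h)
                           (sum_n (fun a => INR a * INR a * p a) h))
    by (apply sum_n_Rext; intros; unfold q; rewrite truncate_eq; auto).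
  assert (q_mean : sum_n (fun a => INR a * q a) h <= 1).
  { rewrite (sum_n_Rext _ (fun a => INR a * p a)); auto.
    intros; unfold q; rewrite truncate_eq; auto. }
  pose proof (sum_n_convpow_quadratic_ge q h (fun j => proj1 (q_bounds j)) (truncate_support p h)
    ltac:(rewrite q_mass; auto) q_mean K y K_pos) as Hq.
  rewrite q_mass, q_second in Hq.
  replace (V y - INR y * c) with (1 - INR y * (1 - sum_n p h)
     - (INR y * sum_n (fun a => INR a * INR a * p a) h + INR y * INR y) / K)
    by (unfold V, c; field; apply Rgt_not_eq, K_pos).
  apply (Rle_trans _ _ _ Hq).
  apply Rle_trans with (sum_n (fun w => convpow q y w * V w) (y * h + k)).
  - rewrite (sum_n_convpow_support q h (truncate_support p h) y V (y * h + k)) by lia.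
    apply Rle_refl.
  - apply sum_n_convpow_le_step_below; [exact q_bounds|lia].
Qed.


Lemma below_nonneg l z : 0 <= below p k l z.
Proof.
  revert z; induction l as [|l IH]; intros z; simpl.
  - destruct (_ && _)%bool; lra.
  - destruct (z <? k)%nat; [|lra].
    apply sum_n_nonneg; intros y _; destruct (y <? k)%nat; [|lra].
    apply Rmult_le_pos; auto using convpow_nonneg.
Qed.

Lemma expect_below_0 g : expect_below p k 0 g = g 1%nat.
Proof.
  unfold expect_below; rewrite (sum_n_zero_beyond _ 1 k); [|lia|].
  2:{ intros [|[|z]] Hz; [lia|lia|simpl; destruct (_ <? k)%nat; ring]. }
  rewrite sum_n_Rsucc, sum_n_R0; simpl.
  destruct (Nat.ltb_spec 1 k); [|lia]; destruct (0 <? k)%nat; ring.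
Qed.

Lemma expect_below_S l g : expect_below p k (S l) g =
  sum_n (fun y => if (y <? k)%nat then below p k l y * step_below p k y g else 0) k.
Proof.
  unfold expect_below, step_below.
  rewrite (sum_n_Rext _ (fun w => sum_n (fun y =>
    if (w <? k)%nat then if (y <? k)%nat then below p k l y * convpow p y w * g w else 0
    else 0) k)).
  - rewrite sum_n_switch; apply sum_n_Rext; intros y _.
    destruct (y <? k)%nat.
    + rewrite <- sum_n_Rmult_l; apply sum_n_Rext; intros w _.
      destruct (w <? k)%nat; ring.
    + rewrite (sum_n_Rext _ (fun _ => 0)) by (intros w _; now destruct (w <? k)%nat).
      apply sum_n_zero.
  - intros w _; simpl.
    destruct (w <? k)%nat; [|now rewrite sum_n_zero].
    rewrite <- sum_n_Rmult_r; apply sum_n_Rext; intros y _.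
    destruct (y <? k)%nat; ring.
Qed.

Lemma expect_below_mean_le_1 l : expect_below p k l INR <= 1.
Proof.
  induction l as [|l IH]; [rewrite expect_below_0; simpl; lra|].
  apply Rle_trans with (2 := IH); rewrite expect_below_S; unfold expect_below.
  apply sum_n_Rle; intros y _; destruct (y <? k)%nat; [|lra].
  apply Rmult_le_compat_l; [apply below_nonneg|].
  apply Rle_trans with (sum_n (fun w => convpow p y w * INR w) k).
  - apply sum_n_Rle; intros w _; destruct (w <? k)%nat; [lra|].
    apply Rmult_le_pos; auto using convpow_nonneg, pos_INR.
  - now apply convpow_mean_le.
Qed.

Lemma c_nonneg : 0 <= c.
Proof.
  assert (0 <= sum_n (fun a => INR a * INR a * p a) h / K).
  { apply Rdiv_le_0_compat; [|exact K_pos].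
    apply sum_n_nonneg; intros; apply Rmult_le_pos; auto.
    apply Rmult_le_pos; apply pos_INR. }
  specialize (p_mass h); unfold c; lra.
Qed.

Lemma expect_below_V_ge l : V 1 - INR l * c <= expect_below p k l V.
Proof.
  induction l as [|l IH]; [rewrite expect_below_0; simpl; lra|].
  assert (expect_below p k l V - c * expect_below p k l INR <= expect_below p k (S l) V).
  { rewrite expect_below_S; unfold expect_below.
    rewrite <- sum_n_Rmult_l, <- sum_n_Rminus; apply sum_n_Rle; intros y _.
    destruct (y <? k)%nat; [|lra].
    pose proof (step_below_V_ge y); pose proof (below_nonneg l y); nra. }
  pose proof (expect_below_mean_le_1 l); pose proof c_nonneg.
  rewrite S_INR; nra.
Qed.

Lemma GW_max_ge_le m : GW_max_ge p m k <= 1 / K + INR m * c.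
Proof.
  assert (expect_below p k m V <= sum_n (fun z => if (z <? k)%nat then below p k m z else 0) k).
  { apply sum_n_Rle; intros z _; destruct (z <? k)%nat; [|lra].
    assert (0 <= INR z * INR z / K)
      by (apply Rdiv_le_0_compat; [apply Rmult_le_pos; apply pos_INR|exact K_pos]).
    pose proof (below_nonneg m z); unfold V; nra. }
  pose proof (expect_below_V_ge m).
  unfold GW_max_ge; unfold V in *; simpl in *; lra.
Qed.

End Potential.

Lemma is_series_partial_le (a : nat -> R) l :
  is_series a l -> (forall n, 0 <= a n) -> forall N, sum_n a N <= l.
Proof.
  intros Ha a_nonneg; apply is_lim_seq_incr_compare; [exact Ha|].
  intros n; rewrite sum_n_Rsucc; specialize (a_nonneg (S n)); lra.
Qed.

Lemma is_series_truncate (p : nat -> R) h : is_series (truncate p h) (sum_n p h).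
Proof.
  change (is_lim_seq (sum_n (truncate p h)) (sum_n p h)).
  apply (is_lim_seq_ext_loc (fun _ => sum_n p h)); [|apply is_lim_seq_const].
  exists h; intros N HN; symmetry.
  rewrite (sum_n_zero_beyond _ h N HN) by (intros; now apply truncate_support).
  apply sum_n_Rext; intros; now apply truncate_eq.
Qed.

Lemma half_lt_INR k j : INR k / 2 < INR j <-> (k / 2 < j)%nat.
Proof.
  pose proof (Nat.div_mod_eq k 2); pose proof (Nat.mod_upper_bound k 2).
  split; intros Hkj.
  - destruct (Nat.le_gt_cases j (k / 2)) as [Hj|Hj]; [|exact Hj].
    assert (2 * j <= k)%nat as Hle%le_INR by lia; rewrite mult_INR in Hle; simpl in Hle; lra.
  - assert (k < 2 * j)%nat as Hlt%lt_INR by lia; rewrite mult_INR in Hlt; simpl in Hlt; lra.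
Qed.

Lemma tail_half (p : nat -> R) k : is_series p 1 -> tail p (INR k / 2) = 1 - sum_n p (k / 2).
Proof.
  intros Hp; apply is_series_unique.
  apply (is_series_ext (fun j => p j - truncate p (k / 2) j)).
  - intros j; unfold truncate; destruct (Rlt_dec (INR k / 2) (INR j)) as [Hj|Hj];
      rewrite half_lt_INR in Hj; destruct (Nat.leb_spec j (k / 2)); try lia.
    + apply Rminus_0_r.
    + apply Rminus_diag.
  - exact (is_series_minus _ _ _ _ Hp (is_series_truncate p (k / 2))).
Qed.

Section FactorialMoment.

Variable p : nat -> R.
Hypothesis p_nonneg : forall j, 0 <= p j.

Lemma B_term_nonneg j : 0 <= INR j * (INR j - 1) * p j.
Proof.
  apply Rmult_le_pos; auto.
  destruct j as [|j]; [simpl; lra|].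
  rewrite S_INR; pose proof (pos_INR j); nra.
Qed.

Lemma B_le n N : (n <= N)%nat -> B p n <= B p N.
Proof. intros HnN; apply sum_n_nonneg_le; auto using B_term_nonneg. Qed.

Lemma B_pos_ge_2 k : 0 < B p k -> (2 <= k)%nat.
Proof.
  unfold B; intros HB.
  destruct k as [|[|k]]; [| |lia]; [rewrite sum_n_R0 in HB|rewrite sum_n_Rsucc, sum_n_R0 in HB];
    simpl in HB; lra.
Qed.

Lemma B_pos_lower_bound : exists b, 0 < b /\ forall k, 0 < B p k -> b <= B p k.
Proof.
  destruct (classic (exists n, 0 < B p n)) as [Hex|Hnone].
  - destruct (dec_inh_nat_subset_has_unique_least_element (fun n => 0 < B p n))
      as (n & (Hn & Hleast) & _); [intros n; apply classic|exact Hex|].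
    exists (B p n); split; [exact Hn|].
    intros k Hk; apply B_le, Hleast, Hk.
  - exists 1; split; [lra|].
    intros k Hk; exfalso; apply Hnone; exists k; exact Hk.
Qed.

Lemma sum_n_sq_le_B n k : (n <= k)%nat ->
  sum_n (fun a => INR a * INR a * p a) n <= B p k + sum_n (fun a => INR a * p a) n.
Proof.
  intros Hnk.
  rewrite (sum_n_Rext _ (fun a => INR a * (INR a - 1) * p a + INR a * p a)) by (intros; ring).
  rewrite sum_n_Rplus; pose proof (B_le n k Hnk); unfold B in *; lra.
Qed.

End FactorialMoment.

Lemma GW_max_ge_le_B (p : nat -> R) k m :
  (forall j, 0 <= p j) -> is_series p 1 ->
  (forall N, sum_n (fun j => INR j * p j) N <= 1) -> (2 <= k)%nat ->
  GW_max_ge p m k <= (1 + INR m * (B p k + 1)) / INR k ^ 2 + INR m * tail p (INR k / 2).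
Proof.
  intros p_nonneg p_series p_mean k_ge_2.
  pose proof (GW_max_ge_le p k p_nonneg (is_series_partial_le p 1 p_series p_nonneg) p_mean
    k_ge_2 m) as Hmax.
  pose proof (sum_n_sq_le_B p p_nonneg (k / 2) k (Nat.Div0.div_le_upper_bound k 2 k ltac:(lia)))
    as Hsq.
  pose proof (p_mean (k / 2)%nat).
  assert (0 < INR k) by (apply lt_0_INR; lia).
  assert (0 < INR k ^ 2) by (apply pow_lt; lra).
  rewrite tail_half by exact p_series.
  assert (INR m * (sum_n (fun a => INR a * INR a * p a) (k / 2) / INR k ^ 2)
          <= INR m * ((B p k + 1) / INR k ^ 2)).
  { apply Rmult_le_compat_l; [apply pos_INR|].
    apply Rmult_le_compat_r; [left; apply Rinv_0_lt_compat; lra|lra]. }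
  assert (E : (1 + INR m * (B p k + 1)) / INR k ^ 2 = 1 / INR k ^ 2 + INR m * ((B p k + 1) / INR k ^ 2))
    by (field; lra).
  rewrite E; rewrite Rmult_plus_distr_l in Hmax; lra.
Qed.

Theorem lemma8 (p : nat -> R) (Hp : offspring_law p) (Hc : critical_nondeg p) :
  exists c1 c2 : R,
    forall k m : nat, (1 <= k)%nat -> (1 <= m)%nat ->
      0 < B p k -> c2 < INR k / (INR m * B p k) ->
      GW_max_ge p m k
        <= c1 * (INR m * B p k / (INR k ^ 2)) + INR m * tail p (INR k / 2).
Proof.
  destruct Hp as [p_nonneg p_series], Hc as [p_mean_series _].
  pose proof (is_series_partial_le _ _ p_mean_series
    (fun j => Rmult_le_pos _ _ (pos_INR j) (p_nonneg j))) as p_mean.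
  destruct (B_pos_lower_bound p p_nonneg) as (b & b_pos & b_le).
  exists (1 + 2 / b), 0; intros k m _ m_ge_1 B_pos _.
  pose proof (B_pos_ge_2 p k B_pos) as k_ge_2.
  apply (Rle_trans _ _ _ (GW_max_ge_le_B p k m p_nonneg p_series p_mean k_ge_2)).
  apply Rplus_le_compat_r.
  apply (le_INR 1) in m_ge_1; simpl in m_ge_1.
  assert (0 < INR k ^ 2) by (apply pow_lt, lt_0_INR; lia).
  assert (1 <= B p k / b) by (apply Rle_div_r; [lra|]; specialize (b_le k B_pos); lra).
  assert (1 + INR m * (B p k + 1) <= (1 + 2 / b) * (INR m * B p k)).
  { replace ((1 + 2 / b) * (INR m * B p k)) with (INR m * B p k + 2 * INR m * (B p k / b))
      by (field; lra).
    nra. }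
  unfold Rdiv at 1 3; rewrite <- Rmult_assoc.
  apply Rmult_le_compat_r; [left; apply Rinv_0_lt_compat|]; lra.
Qed.
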